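(* Let $\mathfrak{X}$ be a Bourgain–Delbaen space determined by $(\Gamma_q,i_q)_q$ and let $\Gamma'$ be a self-determined subset of $\Gamma$. For $q\in\mathbb{N}$ let $\Gamma_q''=\Gamma_q\setminus\Gamma'$. Then for every $q\in\mathbb{N}$, $i_q[\ell_\infty(\Gamma_q'')]=\langle\{d_\gamma:\gamma\in\Gamma_q''\}\rangle$, where $\ell_\infty(\Gamma_q'')$ is naturally identified with a subspace of $\ell_\infty(\Gamma_q)$. In particular, the closed linear span $Y$ of $\{d_\gamma:\gamma\in\Gamma\setminus\Gamma'\}$ is a $\mathscr{L}_\infty$-space.
   Context: Bourgain–Delbaen spaces: $(\Gamma_q)_{q\geqslant1}$ is a strictly increasing sequence of non-empty finite sets, $\Gamma=\bigcup_q\Gamma_q$, and $i_q:\ell_\infty(\Gamma_q)\to\ell_\infty(\Gamma)$ are linear extension operators (i.e. $i_q(x)|_{\Gamma_q}=x$) with $\sup_q\|i_q\|<\infty$, which are compatible: for $p<q$, $i_p=i_q\circ r_q\circ i_p$, where $r_q$ is restriction to $\Gamma_q$. Set $\Delta_1=\Gamma_1$, $\Delta_{q+1}=\Gamma_{q+1}\setminus\Gamma_q$, and for $\gamma\in\Delta_q$ let $d_\gamma=i_q(e_\gamma)$; $\mathfrak{X}$ is the closed span of $\{d_\gamma\}$ in $\ell_\infty(\Gamma)$. For $\gamma\in\Gamma$, $e_\gamma^*$ is evaluation at $\gamma$ restricted to $\mathfrak{X}$ and $(d_\gamma^* )$ are the functionals biorthogonal to $(d_\gamma)$. An infinite subset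 $\Gamma'\subseteq\Gamma$ is self-determined if each $d_\gamma^*$, $\gamma\in\Gamma'$, lies in the linear span of $\{e_\eta^*:\eta\in\Gamma'\}$. A Banach space is a $\mathscr{L}_\infty$-space if for some $\lambda$ every finite-dimensional subspace is contained in a finite-dimensional subspace $F$ that is $\lambda$-isomorphic to $\ell_\infty^{\dim F}$. $\langle\cdot\rangle$ denotes linear span. *)

From mathcomp Require Import all_boot all_order all_algebra.
From mathcomp Require Import all_classical all_reals.
Unset Implicit Arguments. Unset Strict Implicit. Unset Printing Implicit Defensive.
Import Order.TTheory GRing.Theory Num.Theory.
Local Open Scope ring_scope.
Local Open Scope classical_set_scope.

Section BD.
Variables (R : realType) (Gamma : eqType).

(* elements of Gamma_q, and ell_oo(Gamma_q) = functions on Gamma_q *)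
Definition sub (Gam : nat -> set Gamma) (q : nat) := {g : Gamma | Gam q g}.

(* sup-norm bound written without sup:  ||x||_oo <= M *)
Definition normle (I : Type) (x : I -> R) (M : R) := forall k, `|x k| <= M.

Definition Delta (Gam : nat -> set Gamma) (q : nat) : set Gamma :=
  if q is p.+1 then Gam p.+1 `\` Gam p else Gam 0%N.

Definition ev (Gam : nat -> set Gamma) (q : nat) (g : Gamma) : sub Gam q -> R :=
  fun s => if proj1_sig s == g then 1 else 0.

Definition BD_data (Gam : nat -> set Gamma)
  (i : forall q, (sub Gam q -> R) -> Gamma -> R) : Prop :=
  (forall q, finite_set (Gam q) /\ Gam q !=set0) /\
      (forall q, Gam q `<` Gam q.+1) /\
      (forall g, exists q, Gam q g) /\
      (forall q (a : R) (x y : sub Gam q -> R),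
          i q (fun s => a * x s + y s) = (fun g => a * i q x g + i q y g)) /\
      (forall q x (s : sub Gam q), i q x (proj1_sig s) = x s) /\
      (exists C : R, forall q (x : sub Gam q -> R) (M : R),
          normle _ x M -> normle _ (i q x) (C * M)) /\
    (forall p q (x : sub Gam p -> R), (p < q)%N ->
          i p x = i q (fun s : sub Gam q => i p x (proj1_sig s))).

Definition dset (Gam : nat -> set Gamma)
  (i : forall q, (sub Gam q -> R) -> Gamma -> R) (A : set Gamma) : set (Gamma -> R) :=
  [set y | exists q g, [/\ Delta Gam q g, A g & y = i q (ev Gam q g)]].

Definition lspan (S : set (Gamma -> R)) : set (Gamma -> R) :=
  [set y | exists (n : nat) (a : 'I_n -> R) (v : 'I_n -> Gamma -> R),
     (forall k, S (v k)) /\ y = (fun g => \sum_(k < n) a k * v k g)].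

Definition closed_span (S : set (Gamma -> R)) : set (Gamma -> R) :=
  [set y | (exists M, normle _ y M) /\
     forall eps : R, 0 < eps -> exists z, lspan S z /\ normle _ (fun g => y g - z g) eps].

(* Gamma' is self-determined: infinite, and for gamma in Gamma', d*_gamma lies in
   the linear lspan of {e*_eta : eta in Gamma'}, i.e. some functional
   sum_j a_j e*_{eta_j} (eta_j in Gamma') is biorthogonal to (d_delta)
   at gamma:  it takes the value [delta = gamma] at every d_delta. *)
Definition self_determined (Gam : nat -> set Gamma)
  (i : forall q, (sub Gam q -> R) -> Gamma -> R) (G' : set Gamma) : Prop :=
  infinite_set G' /\
  forall g, G' g -> exists (n : nat) (a : 'I_n -> R) (eta : 'I_n -> Gamma),
     (forall j, G' (eta j)) /\
     forall q d, Delta Gam q d ->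
       \sum_(j < n) a j * i q (ev Gam q d) (eta j) = (if d == g then 1 else 0).

Definition fdspan (m : nat) (v : 'I_m -> Gamma -> R) := lspan [set v k | k in [set: 'I_m]].

Definition Linfty_space (Y : set (Gamma -> R)) : Prop :=
  exists lam : R, forall (m : nat) (v : 'I_m -> Gamma -> R), (forall k, Y (v k)) ->
    exists (m' : nat) (w : 'I_m' -> Gamma -> R),
      [/\ (forall k, Y (w k)), fdspan _ v `<=` fdspan _ w &
      (* F := fdspan _ w is lam-isomorphic to ell_oo^n, n = dim F *)
      exists (n : nat) (T : (Gamma -> R) -> 'I_n -> R) (S : ('I_n -> R) -> Gamma -> R)
             (a b : R),
        (forall c x y, fdspan _ w x -> fdspan _ w y ->
               T (fun g => c * x g + y g) = (fun k => c * T x k + T y k)) /\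
            (forall c u u', S (fun k => c * u k + u' k) = (fun g => c * S u g + S u' g)) /\
            (forall x, fdspan _ w x -> S (T x) = x) /\
            (forall u, fdspan _ w (S u) /\ T (S u) = u) /\
            (forall x M, fdspan _ w x -> normle _ x M -> normle _ (T x) (a * M)) /\
            (forall u M, normle _ u M -> normle _ (S u) (b * M)) /\
            a * b <= lam].

End BD.
Arguments sub {Gamma}.
Arguments normle {R I}.
Arguments Delta {Gamma}.
Arguments ev {R Gamma}.
Arguments BD_data {R Gamma}.
Arguments dset {R Gamma}.
Arguments lspan {R Gamma}.
Arguments closed_span {R Gamma}.
Arguments self_determined {R Gamma}.
Arguments fdspan {R Gamma}.
Arguments Linfty_space {R Gamma}.

From mathcomp Require Import all_boot all_order all_algebra.
From mathcomp Require Import all_classical all_reals.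
From mathcomp Require Import ring.
Import Order.TTheory GRing.Theory Num.Theory.
Local Open Scope ring_scope.
Local Open Scope classical_set_scope.
Set Implicit Arguments. Unset Strict Implicit. Unset Printing Implicit Defensive.

(* Write P_q = i_q r_q ([Proj q]).  For eta in G', self-determination writes
   d*_eta as a finite combination of evaluations at points of G'.  Truncated
   to the levels up to that of eta, the top level of this combination is
   e*_eta alone, so e*_eta(d_gamma) is a combination of values of d_gamma at
   points of G' of lower level; by induction on the level, d_gamma vanishes on
   G' whenever gamma is not in G'.  This gives the inclusion of the span of the
   d_gamma, gamma in Gamma_q'', in i_q[l_oo(Gamma_q'')]; conversely, by
   induction on q, i_q x is P_(q-1)(i_q x) plus a combination of the d_gamma,
   gamma in Delta_q \ G'.
   For the second claim, finitely many vectors of Y are combinations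
   sum_l v(lam_l) b_l of some b_l in Y.  Choosing q with every lam_l in Gamma_q
   and every |b_l - P_q b_l| small, the perturbations
     w_gamma = i_q e_gamma + sum_l (i_q e_gamma)(lam_l) (b_l - P_q b_l),
   gamma in Gamma_q'', lie in Y, span a subspace containing the given vectors,
   and restriction to Gamma_q'' is a 2C-isomorphism of that subspace onto
   l_oo(Gamma_q''). *)

Lemma finite_set_uniq_enum (T : eqType) (A : set T) :
  finite_set A -> exists2 l : seq T, uniq l & A = [set` l].
Proof.
move=> /finite_seqP [s ->]; exists (undup s); first exact: undup_uniq.
by apply/seteqP; split => x /=; rewrite mem_undup.
Qed.

Lemma finite_set_ord_enum (T : eqType) (A : set T) :
  finite_set A -> exists n (f : 'I_n -> T), injective f /\ range f = A.
Proof.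
move=> /finite_set_uniq_enum [l l_uniq ->].
exists (size l), (tnth (in_tuple l)); split.
  move=> j j'; have x0 : T := tnth (in_tuple l) j.
  move/eqP; rewrite !(tnth_nth x0) /=.
  by rewrite nth_uniq // => /eqP /val_inj.
apply/seteqP; split => x /=; first by case=> j _ <-; exact: mem_tnth.
by case/(tuple.tnthP (in_tuple l)) => j ->; exists j.
Qed.

Section IndicatorSums.
Variable R : comPzSemiRingType.

Lemma big_seq_indicator (T : eqType) (l : seq T) (F : T -> R) (t : T) :
  uniq l -> \sum_(u <- l) F u * (if t == u then 1 else 0) = if t \in l then F t else 0.
Proof.
move=> l_uniq.
have -> : \sum_(u <- l) F u * (if t == u then 1 else 0) = \sum_(u <- l | u == t) F u.
  rewrite [RHS]big_mkcond /=; apply: eq_bigr => u _.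
  by rewrite eq_sym; case: (u == t); rewrite ?mulr1 ?mulr0.
case: ifP => tl; last by rewrite big1_seq // => u /andP [/eqP -> ul]; rewrite ul in tl.
rewrite (big_rem t tl) /= eqxx big1_seq ?addr0 // => u /andP [/eqP -> tl'].
by rewrite mem_rem_uniqF in tl'.
Qed.

Lemma sum_eval_of_indicator (T : eqType) n (P : pred 'I_n) (a : 'I_n -> R)
    (eta : 'I_n -> T) (c : R) (t0 : T) :
  (forall t, \sum_(j < n | P j) a j * (if eta j == t then 1 else 0)
               = c * (if t == t0 then 1 else 0)) ->
  forall F : T -> R, \sum_(j < n | P j) a j * F (eta j) = c * F t0.
Proof.
move=> ind F.
pose u := undup [seq eta j | j <- enum 'I_n].
have u_uniq : uniq u by apply: undup_uniq.
have eta_u j : eta j \in u by rewrite mem_undup; apply: map_f; rewrite mem_enum.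
have F_eta j : F (eta j) = \sum_(t <- u) F t * (if eta j == t then 1 else 0).
  by rewrite big_seq_indicator // eta_u.
under eq_bigr => j _ do rewrite F_eta big_distrr /=.
rewrite exchange_big /=.
under eq_bigr => t _.
  have -> : \sum_(j < n | P j) a j * (F t * (if eta j == t then 1 else 0))
            = c * (F t * (if t0 == t then 1 else 0)).
    by rewrite mulrCA eq_sym -ind big_distrr /=; apply: eq_bigr => j _; rewrite mulrCA.
  over.
rewrite -big_distrr /= big_seq_indicator //.
case: ifP => // t0u.
have := ind t0; rewrite eqxx mulr1 => <-.
rewrite big1 ?mul0r // => j _.
by case: eqP => [etaj|]; [rewrite -etaj eta_u in t0u | rewrite mulr0].
Qed.

End IndicatorSums.

Section LinClosed.
Variables (R : pzRingType) (T : Type).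

Definition lin_closed (V : set (T -> R)) :=
  V (fun _ => 0) /\ forall a x y, V x -> V y -> V (fun t => a * x t + y t).

Lemma lin_closed_vanishing (E : set T) :
  lin_closed [set x : T -> R | forall t, E t -> x t = 0].
Proof. by split => // a x y x0 y0 t Et; rewrite x0 ?y0 // mulr0 addr0. Qed.

Variable V : set (T -> R).
Hypothesis V_lin : lin_closed V.

Lemma lin_closed_comb a b x y : V x -> V y -> V (fun t => a * x t + b * y t).
Proof.
move=> Vx Vy; apply: (proj2 V_lin) Vx _.
have -> : (fun t => b * y t) = (fun t => b * y t + 0) by apply: funext => t; rewrite addr0.
exact: (proj2 V_lin) Vy (proj1 V_lin).
Qed.

Lemma lin_closed_sum (I : eqType) (r : seq I) (c : I -> R) (f : I -> T -> R) :
  (forall j, j \in r -> V (f j)) -> V (fun t => \sum_(j <- r) c j * f j t).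
Proof.
elim: r => [|j r IH] Vf; first by under eq_fun do rewrite big_nil; exact: (proj1 V_lin).
under eq_fun do rewrite big_cons.
apply: (proj2 V_lin); first by apply: Vf; rewrite mem_head.
by apply: IH => j' j'r; apply: Vf; rewrite in_cons j'r orbT.
Qed.

End LinClosed.

Lemma lin_closed_interpolation (R : fieldType) (T : Type) (V : set (T -> R)) m
    (v : 'I_m -> T -> R) :
  lin_closed V -> (forall j, V (v j)) ->
  exists k (lam : 'I_k -> T) (b : 'I_k -> T -> R),
    (forall l, V (b l)) /\ forall j, v j = fun t => \sum_(l < k) v j (lam l) * b l t.
Proof.
move=> V_lin; elim: m v => [|m IH] v Vv.
  by exists 0%N, (ffun0 (card_ord 0)), (fun _ _ => 0); split => // -[].
have [k [lam [b [Vb vE]]]] := IH (fun j => v (lift ord0 j)) (fun j => Vv _).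
pose v0 := v ord0.
pose r t := v0 t - \sum_(l < k) v0 (lam l) * b l t.
have Vr : V r.
  have -> : r = fun t => 1 * v0 t + (-1) * \sum_(l < k) v0 (lam l) * b l t.
    by apply: funext => t; rewrite /r; ring.
  exact: (lin_closed_comb V_lin) (Vv _) (lin_closed_sum V_lin _ (fun l _ => Vb l)).
have [r0|/existsNP [t0 /eqP rt0]] := pselect (forall t, r t = 0).
  exists k, lam, b; split => // j; case: (unliftP ord0 j) => [j' ->|->]; first exact: vE.
  by apply: funext => t; apply/eqP; rewrite -subr_eq0; apply/eqP; exact: r0.
(* Add the point [t0] where the residual [r] of [v0] does not vanish, and
   correct the old functions [b l] so that they vanish at [t0]. *)
pose lam' l := if unlift ord0 l is Some l' then lam l' else t0.
pose b' l := if unlift ord0 l is Some l' then fun t => b l' t - b l' t0 / r t0 * r t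
             else fun t => r t / r t0.
have b'E u t : \sum_(l < k.+1) u (lam' l) * b' l t =
    \sum_(l < k) u (lam l) * b l t
    + (u t0 - \sum_(l < k) u (lam l) * b l t0) * r t / r t0.
  rewrite big_ord_recl /lam' /b' unlift_none.
  under eq_bigr => l _ do rewrite liftK.
  have -> : \sum_(l < k) u (lam l) * (b l t - b l t0 / r t0 * r t) =
      \sum_(l < k) u (lam l) * b l t - (\sum_(l < k) u (lam l) * b l t0) * (r t / r t0).
    by rewrite big_distrl -sumrB /=; apply: eq_bigr => l _; ring.
  ring.
exists k.+1, lam', b'; split.
  move=> l; rewrite /b'; case: (unlift ord0 l) => [l'|].
    have -> : (fun t => b l' t - b l' t0 / r t0 * r t) =
        fun t => 1 * b l' t + (- (b l' t0 / r t0)) * r t by apply: funext => t; ring.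
    exact: (lin_closed_comb V_lin).
  have -> : (fun t => r t / r t0) = fun t => (r t0)^-1 * r t + 0 * r t by apply: funext => t; ring.
  exact: (lin_closed_comb V_lin).
move=> j; apply: funext => t; rewrite b'E.
case: (unliftP ord0 j) => [j' ->|->].
  by rewrite -!(congr1 (fun f => f _) (vE j')) subrr !mul0r addr0.
have v0E h : \sum_(l < k) v0 (lam l) * b l h = v0 h - r h by rewrite /r; ring.
by rewrite -/v0 !v0E; field.
Qed.

Section FunctionSpaces.
Variables (R : realType) (T : eqType).
Implicit Types (S V : set (T -> R)) (x : T -> R).

Definition normbounded : set (T -> R) := [set x | exists M, normle x M].

(* The body of [Linfty_space]: [fdspan w] is [lam]-isomorphic to [ell_oo^n]. *)
Definition linfty_iso (lam : R) m (w : 'I_m -> T -> R) : Prop :=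
  exists (n : nat) (Tr : (T -> R) -> 'I_n -> R) (Sy : ('I_n -> R) -> T -> R) (a b : R),
    (forall c x y, fdspan _ w x -> fdspan _ w y ->
       Tr (fun g => c * x g + y g) = (fun k => c * Tr x k + Tr y k)) /\
    (forall c u u', Sy (fun k => c * u k + u' k) = (fun g => c * Sy u g + Sy u' g)) /\
    (forall x, fdspan _ w x -> Sy (Tr x) = x) /\
    (forall u, fdspan _ w (Sy u) /\ Tr (Sy u) = u) /\
    (forall x M, fdspan _ w x -> normle x M -> normle (Tr x) (a * M)) /\
    (forall u M, normle u M -> normle (Sy u) (b * M)) /\
    a * b <= lam.

Lemma mem_lspan S x : S x -> lspan S x.
Proof.
move=> Sx; exists 1%N, (fun _ => 1), (fun _ => x); split => //.
by apply: funext => t; rewrite big_ord1 mul1r.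
Qed.

Lemma lspan_lin_closed S : lin_closed (lspan S).
Proof.
split.
  exists 0%N, (fun _ => 0), (fun _ _ => 0); split; first by case.
  by apply: funext => t; rewrite big_ord0.
move=> a _ _ [n1 [a1 [v1 [S1 ->]]]] [n2 [a2 [v2 [S2 ->]]]].
exists (n1 + n2)%N,
  (fun k => match fintype.split k with inl k1 => a * a1 k1 | inr k2 => a2 k2 end),
  (fun k => match fintype.split k with inl k1 => v1 k1 | inr k2 => v2 k2 end).
split; first by move=> k; case: (fintype.split k).
apply: funext => t; rewrite big_split_ord /= big_distrr /=.
congr (_ + _); apply: eq_bigr => k _; first by rewrite (unsplitK (inl k)) mulrA.
by rewrite (unsplitK (inr k)).
Qed.

Lemma lspan_sub_lin_closed S V : lin_closed V -> S `<=` V -> lspan S `<=` V.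
Proof.
move=> V_lin SV _ [n [a [v [Sv ->]]]].
by apply: lin_closed_sum => // k _; apply: SV.
Qed.

Lemma sub_lspan S S' : S `<=` S' -> lspan S `<=` lspan S'.
Proof.
move=> SS'; apply: lspan_sub_lin_closed; first exact: lspan_lin_closed.
by move=> x /SS' /mem_lspan.
Qed.

Lemma normbounded_lin_closed : lin_closed normbounded.
Proof.
split; first by exists 0 => t; rewrite normr0.
move=> a x y [Mx xM] [My yM]; exists (`|a| * Mx + My) => t.
apply: le_trans (ler_normD _ _) _; rewrite normrM; apply: lerD (yM t).
exact: ler_wpM2l.
Qed.

Lemma closed_span_lin_closed S : lin_closed (closed_span S).
Proof.
have [span0 span_lin] := lspan_lin_closed S.
have [bd0 bd_lin] := normbounded_lin_closed.
split.
  split; first exact: bd0.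
  by move=> eps eps_gt0; exists (fun _ => 0); split => // t; rewrite subr0 normr0 ltW.
move=> a x y [xb xapp] [yb yapp]; split; first exact: bd_lin.
move=> eps eps_gt0.
have a1_gt0 : 0 < `|a| + 1 by rewrite ltr_wpDl.
pose del := eps / (`|a| + 1).
have del_gt0 : 0 < del by rewrite divr_gt0.
have [zx [zxS xzx]] := xapp del del_gt0; have [zy [zyS yzy]] := yapp del del_gt0.
exists (fun t => a * zx t + zy t); split; first exact: span_lin.
move=> t; have -> : a * x t + y t - (a * zx t + zy t) = a * (x t - zx t) + (y t - zy t).
  by ring.
apply: le_trans (ler_normD _ _) _; rewrite normrM.
apply: le_trans (lerD (ler_wpM2l (normr_ge0 a) (xzx t)) (yzy t)) _.
by have -> : `|a| * del + del = eps by rewrite /del; field; rewrite gt_eqF.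
Qed.

Lemma lspan_sub_closed_span S : S `<=` normbounded -> lspan S `<=` closed_span S.
Proof.
move=> Sb x Sx; split; first exact: lspan_sub_lin_closed normbounded_lin_closed Sb _ Sx.
by move=> eps eps_gt0; exists x; split => // t; rewrite subrr normr0 ltW.
Qed.

Lemma closed_span_vanishing S (E : set T) :
  lspan S `<=` [set x | forall t, E t -> x t = 0] ->
  closed_span S `<=` [set x | forall t, E t -> x t = 0].
Proof.
move=> SE x [_ xapp] t Et; apply/eqP; rewrite -normr_le0; apply/ler_addgt0Pr => eps eps_gt0.
have [z [Sz xz]] := xapp eps eps_gt0.
by have := xz t; rewrite (SE z Sz t Et) subr0 add0r.
Qed.

End FunctionSpaces.

Section BourgainDelbaen.
Unset Implicit Arguments.
Variables (R : realType) (Gamma : eqType) (Gam : nat -> set Gamma)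
  (i : forall q, (sub Gam q -> R) -> Gamma -> R) (C : R).
Hypothesis Gam_finite : forall q, finite_set (Gam q).
Hypothesis Gam_subS : forall q, Gam q `<=` Gam q.+1.
Hypothesis Gam_cover : forall g, exists q, Gam q g.
Hypothesis i_lin : forall q (a : R) (x y : sub Gam q -> R),
  i q (fun s => a * x s + y s) = (fun g => a * i q x g + i q y g).
Hypothesis i_ext : forall q x (s : sub Gam q), i q x (proj1_sig s) = x s.
Hypothesis i_bounded : forall q (x : sub Gam q -> R) (M : R),
  normle x M -> normle (i q x) (C * M).
Hypothesis i_compat : forall p q (x : sub Gam p -> R), (p < q)%N ->
  i p x = i q (fun s : sub Gam q => i p x (proj1_sig s)).
Set Implicit Arguments.

Definition dvec q g := i q (ev Gam q g).

Definition Proj q (z : Gamma -> R) := i q (fun s => z (proj1_sig s)).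

Lemma i_zero q : i q (fun _ => 0) = (fun _ => 0).
Proof.
have := i_lin q (-1) (fun _ => 0) (fun _ => 0).
have -> : (fun _ : sub Gam q => -1 * 0 + 0) = (fun _ => 0 :> R).
  by apply: funext => s; rewrite mulr0 addr0.
by move=> ->; apply: funext => g; rewrite mulN1r addNr.
Qed.

Lemma i_sum q (I : Type) (r : seq I) (c : I -> R) (x : I -> sub Gam q -> R) :
  i q (fun s => \sum_(j <- r) c j * x j s) = fun g => \sum_(j <- r) c j * i q (x j) g.
Proof.
elim: r => [|j r IH].
  by under eq_fun do rewrite big_nil; rewrite i_zero; apply: funext => g; rewrite big_nil.
under eq_fun do rewrite big_cons.
by rewrite i_lin IH; apply: funext => g; rewrite big_cons.
Qed.

Lemma Gam_le p q : (p <= q)%N -> Gam p `<=` Gam q.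
Proof.
apply: (@homo_leq _ Gam (fun A B => A `<=` B)) => [A|B A D|//]; first exact: subset_refl.
exact: subset_trans.
Qed.

Lemma Gam_bound n (eta : 'I_n -> Gamma) : exists N, forall j, Gam N (eta j).
Proof.
have [f etaf] := choice (fun j => Gam_cover (eta j)).
by exists (\max_(j < n) f j)%N => j; apply: Gam_le (etaf j); exact: leq_bigmax.
Qed.

Lemma Delta_sub q : Delta Gam q `<=` Gam q.
Proof. by case: q => [|q] //= g []. Qed.

Lemma Delta_le q p g : Delta Gam q g -> Gam p g -> (q <= p)%N.
Proof.
case: q => [|q] //= [_ ngq] gp; rewrite ltnNge; apply/negP => pq.
exact/ngq/(Gam_le pq).
Qed.

Lemma dvecE q k g : Gam q g -> dvec q k g = if g == k then 1 else 0.
Proof. by move=> gq; rewrite /dvec (i_ext _ _ (exist (Gam q) g gq)). Qed.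

Lemma Proj_sum q (I : Type) (r : seq I) (c : I -> R) (y : I -> Gamma -> R) :
  Proj q (fun g => \sum_(j <- r) c j * y j g) = fun g => \sum_(j <- r) c j * Proj q (y j) g.
Proof. exact: i_sum. Qed.

Lemma Proj0 q : Proj q (fun _ => 0) = (fun _ => 0).
Proof. exact: i_zero. Qed.

Lemma Proj_lin q a y z :
  Proj q (fun g => a * y g + z g) = fun g => a * Proj q y g + Proj q z g.
Proof. exact: i_lin. Qed.

Lemma Proj_i p q x : (p <= q)%N -> Proj q (i p x) = i p x.
Proof.
rewrite leq_eqVlt => /orP [/eqP <-|pq]; last by rewrite /Proj -i_compat.
by rewrite /Proj; congr (i p); apply: funext => s; exact: i_ext.
Qed.

Lemma Proj_on q z g : Gam q g -> Proj q z g = z g.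
Proof. by move=> gq; rewrite /Proj (i_ext _ _ (exist (Gam q) g gq)). Qed.

Lemma bound_ge0 (g : Gamma) : 0 <= C.
Proof.
have zero_le1 : normle (fun _ : sub Gam 0 => 0 : R) 1 by move=> s; rewrite normr0.
have := i_bounded 0 _ _ zero_le1 g.
by rewrite i_zero normr0 mulr1.
Qed.

Lemma dvec_normbounded q g : normbounded (dvec q g).
Proof.
exists (C * 1); apply: i_bounded => s.
by rewrite /ev; case: ifP => _; rewrite ?normr1 ?normr0.
Qed.

Lemma dset_sub A B : A `<=` B -> dset Gam i A `<=` dset Gam i B.
Proof. by move=> AB _ [q [g [Dg Ag ->]]]; exists q, g; split => //; exact: AB. Qed.

Lemma lspan_dvec_Proj q A : A `<=` Gam q -> lspan (dset Gam i A) `<=` [set y | Proj q y = y].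
Proof.
move=> AG; apply: lspan_sub_lin_closed => [|_ [p [g [Dg Ag ->]]]]; last first.
  exact/Proj_i/(Delta_le Dg (AG _ Ag)).
split => [|a y z]; first exact: Proj0.
by rewrite /= => yE zE; rewrite Proj_lin yE zE.
Qed.

Lemma lspan_dvec_eventually_Proj A y :
  lspan (dset Gam i A) y -> exists Q, forall q, (Q <= q)%N -> Proj q y = y.
Proof.
pose V := [set y | exists Q, forall q, (Q <= q)%N -> Proj q y = y].
apply: (@lspan_sub_lin_closed _ _ _ V) => [|_ [p [g [_ _ ->]]]]; last first.
  by exists p => q; exact: Proj_i.
split => [|a y1 y2 [Q1 y1Q] [Q2 y2Q]]; first by exists 0%N => q _; rewrite Proj0.
exists (maxn Q1 Q2) => q; rewrite geq_max => /andP [Q1q Q2q].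
by rewrite Proj_lin y1Q // y2Q.
Qed.

Section SelfDetermined.
Variable G' : set Gamma.

(* [d*_g = sum_(j | P j) a_j e*_(eta_j)], tested on the biorthogonal system. *)
Definition represents_dstar n (P : pred 'I_n) (a : 'I_n -> R) (eta : 'I_n -> Gamma) g :=
  forall q δ, Delta Gam q δ ->
    \sum_(j < n | P j) a j * dvec q δ (eta j) = if δ == g then 1 else 0.

Hypothesis G'_sd : forall g, G' g -> exists n (a : 'I_n -> R) (eta : 'I_n -> Gamma),
  (forall j, G' (eta j)) /\ represents_dstar xpredT a eta g.

Lemma sum_split_level s n (a : 'I_n -> R) (eta : 'I_n -> Gamma) (F : Gamma -> R) :
  \sum_(j < n | `[< Gam s.+1 (eta j) >]) a j * F (eta j) =
  \sum_(j < n | `[< Gam s (eta j) >]) a j * F (eta j) +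
  \sum_(j < n | `[< Delta Gam s.+1 (eta j) >]) a j * F (eta j).
Proof.
rewrite (bigID (fun j => `[< Gam s (eta j) >])) /=; congr (_ + _); apply: eq_bigl => j.
  by case: (asboolP (Gam s (eta j))) => [/Gam_subS /asboolT ->|]; rewrite ?andbF.
by rewrite -asbool_neg -asbool_and.
Qed.

Lemma sum_top_level s n (a : 'I_n -> R) (eta : 'I_n -> Gamma) (c : R) t0 :
  c = 0 \/ Delta Gam s.+1 t0 ->
  (forall k, Delta Gam s.+1 k ->
     \sum_(j < n | `[< Gam s.+1 (eta j) >]) a j * dvec s.+1 k (eta j)
     = c * (if k == t0 then 1 else 0)) ->
  forall F : Gamma -> R,
    \sum_(j < n | `[< Delta Gam s.+1 (eta j) >]) a j * F (eta j) = c * F t0.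
Proof.
move=> ct0 top; apply: sum_eval_of_indicator => k.
have [Dk|nDk] := pselect (Delta Gam s.+1 k).
  rewrite -top // sum_split_level [X in X + _]big1 ?add0r => [|j /asboolP js].
    by apply: eq_bigr => j /asboolP [js1 _]; rewrite dvecE.
  rewrite dvecE; last exact: Gam_subS.
  by case: eqP => [ejk|]; [case: Dk => _; rewrite -ejk | rewrite mulr0].
rewrite big1 => [|j /asboolP Dj]; last by case: eqP => [ejk|]; [rewrite ejk in Dj | rewrite mulr0].
case: ct0 => [->|Dt0]; first by rewrite mul0r.
by case: eqP => [kt0|]; [rewrite kt0 in nDk | rewrite mulr0].
Qed.

(* Truncating the representation to the points of [Gam p] keeps it valid: the
   discarded top levels contribute a combination that vanishes on every [dvec]. *)
Lemma represents_dstar_truncate p g n (a : 'I_n -> R) (eta : 'I_n -> Gamma) :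
  Gam p g -> represents_dstar xpredT a eta g ->
  represents_dstar (fun j => `[< Gam p (eta j) >]) a eta g.
Proof.
move=> gp rep.
have [N etaN] := Gam_bound eta.
pose trunc s := represents_dstar (fun j => `[< Gam s (eta j) >]) a eta g.
have trunc_top s : (N <= s)%N -> trunc s.
  move=> Ns q δ Dδ; rewrite -(rep q δ Dδ); apply: eq_bigl => j.
  exact: asboolT (Gam_le Ns (etaN j)).
have trunc_down s : (p <= s)%N -> trunc s.+1 -> trunc s.
  move=> ps ts q δ Dδ.
  rewrite -(ts q δ Dδ) sum_split_level (@sum_top_level _ _ _ _ 0 g) ?mul0r ?addr0;
    [by [] | by left |].
  move=> k Dk; rewrite ts // mul0r; case: eqP => // kg.
  by case: Dk => _; rewrite kg => /(_ (Gam_le ps gp)).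
suff trunc_ge m s : (p <= s)%N -> (N <= s + m)%N -> trunc s.
  by apply: (trunc_ge N) => //; exact: leq_addl.
elim: m s => [|m IH] s ps Nsm; first by apply: trunc_top; rewrite addn0 in Nsm.
by apply: trunc_down ps (IH _ (leqW ps) _); rewrite addSnnS.
Qed.

Lemma dvec_vanish_sd e q g : G' e -> Delta Gam q g -> ~ G' g -> dvec q g e = 0.
Proof.
move=> + Dg nGg; have [t et] := Gam_cover e.
elim: t e et => [|t IH] e et Ge.
  rewrite dvecE; last by apply: (Gam_le (leq0n q)).
  by case: eqP => // eg; rewrite eg in Ge.
have [et'|net] := pselect (Gam t e); first exact: IH.
have [n [a [eta [Geta rep]]]] := G'_sd Ge.
(* Isolating the top level of the truncated representation of [d*_e] leaves
   [e*_e] plus evaluations at points of [G'] of lower level. *)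
have := represents_dstar_truncate et rep Dg.
rewrite sum_split_level (@sum_top_level _ _ _ _ 1 e) => [||k Dk]; last 2 first.
- by right.
- by rewrite mul1r (represents_dstar_truncate et rep Dk).
rewrite big1 => [|j /asboolP etaj]; last by rewrite IH ?mulr0.
by rewrite add0r mul1r => ->; case: eqP => // ge; rewrite ge in nGg.
Qed.

Lemma lspan_dvec_vanish A :
  A `<=` ~` G' -> lspan (dset Gam i A) `<=` [set y | forall e, G' e -> y e = 0].
Proof.
move=> AG; apply: lspan_sub_lin_closed; first exact: lin_closed_vanishing.
by move=> _ [q [g [Dg Ag ->]]] e Ge; apply: dvec_vanish_sd => //; exact: AG.
Qed.

Lemma i_in_lspan_of_agree_off_Delta q (x : sub Gam q -> R) (y : Gamma -> R) :
  lspan (dset Gam i (Gam q `\` G')) y -> Proj q y = y ->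
  (forall s, ~ Delta Gam q (proj1_sig s) -> y (proj1_sig s) = x s) ->
  (forall s, G' (proj1_sig s) -> x s = 0) ->
  lspan (dset Gam i (Gam q `\` G')) (i q x).
Proof.
move=> ly Py yx xG.
have DG_fin : finite_set (Delta Gam q `&` ~` G').
  by apply: sub_finite_set (Gam_finite q) => g [/Delta_sub].
have [l l_uniq l_def] := finite_set_uniq_enum DG_fin.
have inlP g : (Delta Gam q `&` ~` G') g <-> g \in l by rewrite l_def.
have xE : x = fun s => 1 * y (proj1_sig s) + \sum_(g <- l) (i q x g - y g) * ev Gam q g s.
  apply: funext => s; rewrite mul1r /ev big_seq_indicator //.
  have [D|nD] := pselect (Delta Gam q (proj1_sig s)); last first.
    by case: ifP => [/inlP [] //|_]; rewrite addr0 yx.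
  have [G|nG] := pselect (G' (proj1_sig s)).
    case: ifP => [/inlP [] //|_]; rewrite addr0 xG //.
    by rewrite (lspan_dvec_vanish (@subDsetr _ _ _) ly G).
  by case: ifP => [_|/negP[]]; [rewrite i_ext addrC subrK | apply/inlP].
rewrite xE i_lin i_sum.
have -> : i q (fun s => y (proj1_sig s)) = y by exact: Py.
have [_ span_lin] := lspan_lin_closed (dset Gam i (Gam q `\` G')).
apply: span_lin ly _; apply: lin_closed_sum; first exact: lspan_lin_closed.
move=> g /inlP [Dg nGg]; apply: mem_lspan; exists q, g; split => //.
by split => //; exact: Delta_sub.
Qed.

Lemma i_vanishing_in_lspan q x : (forall s, G' (proj1_sig s) -> x s = 0) ->
  lspan (dset Gam i (Gam q `\` G')) (i q x).
Proof.
elim: q x => [|p IH] x xG.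
  apply: (@i_in_lspan_of_agree_off_Delta 0 x (fun _ => 0)) => //; last by move=> [g g0] /=; case.
    exact: (lspan_lin_closed _).1.
  exact: Proj0.
have GpS (s : sub Gam p) : Gam p.+1 (proj1_sig s) by apply: Gam_subS; exact: proj2_sig.
apply: (@i_in_lspan_of_agree_off_Delta _ x (Proj p (i p.+1 x))) => //.
- apply: sub_lspan (IH _ _); first by apply: dset_sub => g [gp nGg]; split => //; exact: Gam_subS.
  by move=> s Gs; rewrite (i_ext _ _ (exist _ _ (GpS s))); exact: xG.
- exact: Proj_i.
- move=> s nD; have gp : Gam p (proj1_sig s).
    by apply: contrapT => ngp; apply: nD; split => //; exact: proj2_sig.
  by rewrite Proj_on // i_ext.
Qed.

Lemma i_vanishing_eq_lspan q :
  [set i q x | x in [set x : sub Gam q -> R | forall s, G' (proj1_sig s) -> x s = 0]]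
  = lspan (dset Gam i (Gam q `\` G')).
Proof.
apply/seteqP; split => [_ [x xG <-]|y ly]; first exact: i_vanishing_in_lspan.
exists (fun s => y (proj1_sig s)); last exact: lspan_dvec_Proj (@subDsetl _ _ _) _ ly.
by move=> s Gs; apply: (lspan_dvec_vanish (@subDsetr _ _ _) ly).
Qed.

Section Linfty.
Hypothesis C_ge0 : 0 <= C.

Local Notation Y := (closed_span (dset Gam i (~` G'))).

Lemma Y_lin_closed : lin_closed Y.
Proof. exact: closed_span_lin_closed. Qed.

Lemma Y_vanish y e : Y y -> G' e -> y e = 0.
Proof.
by move=> Yy Ge; apply: (closed_span_vanishing (lspan_dvec_vanish (@subset_refl _ _)) Yy).
Qed.

Lemma i_vanishing_Y q x : (forall s, G' (proj1_sig s) -> x s = 0) -> Y (i q x).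
Proof.
move=> xG; apply: lspan_sub_closed_span.
  by move=> _ [p [g [_ _ ->]]]; exact: dvec_normbounded.
exact: sub_lspan (dset_sub (@subDsetr _ _ _)) _ (i_vanishing_in_lspan xG).
Qed.

Lemma Proj_Y q y : Y y -> Y (Proj q y).
Proof. by move=> Yy; apply: i_vanishing_Y => s; exact: Y_vanish. Qed.

Lemma Y_approx y eps : Y y -> 0 < eps ->
  exists Q, forall q, (Q <= q)%N -> normle (fun g => y g - Proj q y g) eps.
Proof.
move=> [_ yapp] eps_gt0.
have C1_gt0 : 0 < 1 + C := ltr_wpDr C_ge0 ltr01.
pose del := eps / (1 + C).
have [z [zS yz]] := yapp del (divr_gt0 eps_gt0 C1_gt0).
have [Q zQ] := lspan_dvec_eventually_Proj zS.
exists Q => q Qq g.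
have -> : y g - Proj q y g = (y g - z g) + Proj q (fun h => -1 * y h + z h) g.
  by rewrite Proj_lin zQ //; ring.
have zy : normle (fun s : sub Gam q => -1 * y (proj1_sig s) + z (proj1_sig s)) del.
  by move=> s; rewrite mulN1r addrC -normrN opprB; exact: yz.
apply: le_trans (ler_normD _ _) _; apply: le_trans (lerD (yz g) (i_bounded _ _ _ zy g)) _.
by have -> : del + C * del = eps by rewrite /del; field; rewrite gt_eqF.
Qed.

Section Perturbation.
Variables (q k : nat) (lam : 'I_k -> Gamma) (b : 'I_k -> Gamma -> R) (eps : R).
Hypothesis lam_Gam : forall l, Gam q (lam l).
Hypothesis b_Y : forall l, Y (b l).
Hypothesis b_approx : forall l, normle (fun g => b l g - Proj q (b l) g) eps.
Hypothesis k_eps : k%:R * eps <= 1.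
Variables (n : nat) (gg : 'I_n -> Gamma).
Hypothesis gg_inj : injective gg.
Hypothesis gg_range : range gg = Gam q `\` G'.

Definition perturb (y : Gamma -> R) g :=
  y g + \sum_(l < k) y (lam l) * (b l g - Proj q (b l) g).

Definition pbasis j := perturb (dvec q (gg j)).

Definition synth (u : 'I_n -> R) g := \sum_(j < n) u j * pbasis j g.

Definition coord (x : Gamma -> R) j := x (gg j).

Definition embed (u : 'I_n -> R) (s : sub Gam q) := \sum_(j < n) u j * ev Gam q (gg j) s.

Lemma gg_Gam j : Gam q (gg j) /\ ~ G' (gg j).
Proof. by change ((Gam q `\` G') (gg j)); rewrite -gg_range; exists j. Qed.

Lemma perturb_sum (c : 'I_n -> R) (y : 'I_n -> Gamma -> R) :
  perturb (fun g => \sum_(j < n) c j * y j g) = fun g => \sum_(j < n) c j * perturb (y j) g.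
Proof.
apply: funext => g; rewrite /perturb.
under [RHS]eq_bigr => j _ do rewrite mulrDr.
rewrite big_split /=; congr (_ + _).
under eq_bigr => l _ do rewrite big_distrl /=.
rewrite exchange_big /=; apply: eq_bigr => j _.
by rewrite big_distrr /=; apply: eq_bigr => l _; rewrite mulrA.
Qed.

Lemma synth_perturb u : synth u = perturb (i q (embed u)).
Proof. by rewrite /embed i_sum perturb_sum. Qed.

Lemma embed_gg u j s : proj1_sig s = gg j -> embed u s = u j.
Proof.
move=> sj; rewrite /embed (bigD1 j) //= /ev sj eqxx mulr1 big1 ?addr0 // => j' j'j.
by rewrite (inj_eq gg_inj) eq_sym (negbTE j'j) mulr0.
Qed.

Lemma embed_out u s : ~ range gg (proj1_sig s) -> embed u s = 0.
Proof.
move=> ns; rewrite /embed big1 // => j _; rewrite /ev.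
by case: eqP => [sj|]; [case: ns; exists j | rewrite mulr0].
Qed.

Lemma Proj_vanishing x : (forall e, G' e -> x e = 0) -> Proj q x = i q (embed (coord x)).
Proof.
move=> xG; congr (i q); apply: funext => s.
have [[j _ js]|ns] := pselect (range gg (proj1_sig s)).
  by rewrite (embed_gg _ (esym js)) /coord js.
rewrite embed_out //; apply: xG; apply: contrapT => nGs; apply: ns.
by rewrite gg_range; split => //; exact: proj2_sig.
Qed.

Lemma perturb_Proj x :
  x = (fun t => \sum_(l < k) x (lam l) * b l t) -> perturb (Proj q x) = x.
Proof.
move=> xE; have Px : Proj q x = fun t => \sum_(l < k) x (lam l) * Proj q (b l) t.
  by rewrite {1}xE Proj_sum.
apply: funext => g; rewrite /perturb.
under eq_bigr => l _ do rewrite (Proj_on _ (lam_Gam l)) mulrBr.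
have /= xg := congr1 (fun f => f g) xE; have /= Pxg := congr1 (fun f => f g) Px.
by rewrite sumrB -xg -Pxg addrC subrK.
Qed.

Lemma pbasis_gg j j' : pbasis j (gg j') = if j' == j then 1 else 0.
Proof.
have [gq _] := gg_Gam j'.
rewrite /pbasis /perturb big1 => [|l _]; last by rewrite Proj_on ?subrr ?mulr0.
by rewrite addr0 dvecE // (inj_eq gg_inj).
Qed.

Lemma coord_synth u : coord (synth u) = u.
Proof.
apply: funext => j; rewrite /coord /synth (bigD1 j) //= pbasis_gg eqxx mulr1.
by rewrite big1 ?addr0 // => j' j'j; rewrite pbasis_gg eq_sym (negbTE j'j) mulr0.
Qed.

Lemma synth_lin c u u' :
  synth (fun j => c * u j + u' j) = fun g => c * synth u g + synth u' g.
Proof.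
apply: funext => g; rewrite /synth big_distrr -big_split /=.
by apply: eq_bigr => j _; ring.
Qed.

Lemma synth_fdspan u : fdspan n pbasis (synth u).
Proof. by exists n, u, pbasis; split => // j; exists j. Qed.

Lemma synth_coord x : fdspan n pbasis x -> synth (coord x) = x.
Proof.
have V_lin : lin_closed [set x | synth (coord x) = x].
  split => [|c x1 x2 /= x1E x2E].
    by apply: funext => g; rewrite /synth big1 // => j _; rewrite mul0r.
  by rewrite -[coord _]/(fun j => c * coord x1 j + coord x2 j) synth_lin x1E x2E.
apply: (lspan_sub_lin_closed V_lin) => _ [j _ <-] /=.
apply: funext => g; rewrite /synth (bigD1 j) //= /coord pbasis_gg eqxx mul1r.
by rewrite big1 ?addr0 // => j' j'j; rewrite pbasis_gg (negbTE j'j) mul0r.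
Qed.

Lemma synth_coord_interpolated x :
  Y x -> x = (fun t => \sum_(l < k) x (lam l) * b l t) -> synth (coord x) = x.
Proof.
move=> Yx xE; rewrite synth_perturb -Proj_vanishing ?perturb_Proj // => e.
exact: Y_vanish.
Qed.

Lemma perturb_Y y : Y y -> Y (perturb y).
Proof.
move=> Yy; have [_ Y_add] := Y_lin_closed.
have -> : perturb y = fun g => 1 * y g + \sum_(l < k) y (lam l) * (b l g - Proj q (b l) g).
  by apply: funext => g; rewrite mul1r.
apply: Y_add Yy _; apply: (lin_closed_sum Y_lin_closed) => l _.
have -> : (fun g => b l g - Proj q (b l) g) = fun g => 1 * b l g + (-1) * Proj q (b l) g.
  by apply: funext => g; ring.
exact: (lin_closed_comb Y_lin_closed) (b_Y l) (Proj_Y q (b_Y l)).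
Qed.

Lemma pbasis_Y j : Y (pbasis j).
Proof.
apply/perturb_Y/i_vanishing_Y => s Gs; rewrite /ev.
by case: eqP => // sj; case: (gg_Gam j) => _; rewrite -sj.
Qed.

Lemma embed_normle u M : 0 <= M -> normle u M -> normle (embed u) M.
Proof.
move=> M_ge0 uM s; have [[j _ js]|ns] := pselect (range gg (proj1_sig s)).
  by rewrite (embed_gg _ (esym js)).
by rewrite embed_out ?normr0.
Qed.

Lemma synth_normle u M : (0 < n)%N -> normle u M -> normle (synth u) (2 * C * M).
Proof.
move=> n_gt0 uM.
have M_ge0 : 0 <= M := le_trans (normr_ge0 _) (uM (Ordinal n_gt0)).
have CM_ge0 : 0 <= C * M by rewrite mulr_ge0.
have yM := i_bounded _ _ _ (embed_normle M_ge0 uM).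
move=> g; rewrite synth_perturb /perturb.
apply: le_trans (ler_normD _ _) _.
have -> : 2 * C * M = C * M + C * M by ring.
apply: lerD (yM g) _; apply: le_trans (ler_norm_sum _ _ _) _.
apply: (le_trans (y := \sum_(l < k) C * M * eps)).
  apply: ler_sum => l _; rewrite normrM.
  exact: ler_pM (normr_ge0 _) (normr_ge0 _) (yM _) (b_approx l g).
rewrite sumr_const card_ord -mulr_natr -mulrA; apply: ler_piMr => //.
by rewrite mulrC.
Qed.

Lemma pbasis_linfty_iso : linfty_iso (2 * C) pbasis.
Proof.
(* For [n = 0] every [M], even a negative one, bounds [u], so [synth] needs the constant [0]. *)
exists n, coord, synth, 1, (if (0 < n)%N then 2 * C else 0).
split; first by [].
split; first exact: synth_lin.
split; first exact: synth_coord.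
split; first by move=> u; split; [exact: synth_fdspan | exact: coord_synth].
split; first by move=> x M _ xM j; rewrite mul1r; exact: xM.
split; last by rewrite mul1r; case: ifP => // _; exact: mulr_ge0.
move=> u M uM; case: (posnP n) => [n0|n_gt0]; last exact: synth_normle.
by move=> g; rewrite mul0r /synth big1 ?normr0 // => -[j jn]; exfalso; have := jn; rewrite n0.
Qed.

Lemma pbasis_witness m (v : 'I_m -> Gamma -> R) :
  (forall j, Y (v j)) -> (forall j, v j = fun t => \sum_(l < k) v j (lam l) * b l t) ->
  exists m' (w : 'I_m' -> Gamma -> R),
    [/\ forall j, Y (w j), fdspan _ v `<=` fdspan _ w & linfty_iso (2 * C) w].
Proof.
move=> Yv vE; exists n, pbasis; split; [exact: pbasis_Y | | exact: pbasis_linfty_iso].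
apply: lspan_sub_lin_closed; first exact: lspan_lin_closed.
by move=> _ [j _ <-]; rewrite -(synth_coord_interpolated (Yv j) (vE j)); exact: synth_fdspan.
Qed.

End Perturbation.

Lemma Y_Linfty : Linfty_space Y.
Proof.
exists (2 * C) => m v Yv.
have [k [lam [b [Yb vE]]]] := lin_closed_interpolation Y_lin_closed Yv.
have [q0 lam_q0] := Gam_bound lam.
have k1_gt0 : 0 < k%:R + 1 :> R := ltr_wpDl (ler0n _ k) ltr01.
pose eps : R := (k%:R + 1)^-1.
have eps_gt0 : 0 < eps by rewrite invr_gt0.
have [Q bQ] := choice (fun l => Y_approx (Yb l) eps_gt0).
pose q := maxn q0 (\max_(l < k) Q l).
have lam_q l : Gam q (lam l) by apply: Gam_le (lam_q0 l); exact: leq_maxl.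
have b_approx l : normle (fun g => b l g - Proj q (b l) g) eps.
  by apply: bQ; apply: leq_trans (leq_maxr _ _); exact: leq_bigmax.
have k_eps : k%:R * eps <= 1 by rewrite ler_pdivrMr // mul1r lerDl.
have [n [gg [gg_inj gg_range]]] := finite_set_ord_enum (finite_setD G' (Gam_finite q)).
exact: (pbasis_witness lam_q Yb b_approx k_eps gg_inj gg_range Yv vE).
Qed.

End Linfty.
End SelfDetermined.
End BourgainDelbaen.

Unset Implicit Arguments.

Theorem proposition1p7 (R : realType) (Gamma : eqType) (Gam : nat -> set Gamma)
  (i : forall q : nat, (sub Gam q -> R) -> Gamma -> R) (G' : set Gamma) :
  BD_data Gam i -> self_determined Gam i G' ->
  (forall q : nat,
     [set i q x | x in [set x : sub Gam q -> R | forall s, G' (proj1_sig s) -> x s = 0]]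
     = lspan (dset Gam i (Gam q `\` G'))) /\
  Linfty_space (closed_span (dset Gam i (~` G'))).
Proof.
move=> [Gam_fin_neq0 [Gam_lt [cover [lin [ext [[C bounded] compat]]]]]] [_ sd].
have Gam_fin q := (Gam_fin_neq0 q).1.
have Gam_subS q := properW (Gam_lt q).
have [g _] := (Gam_fin_neq0 0).2.
split; first exact (i_vanishing_eq_lspan Gam_fin Gam_subS cover lin ext compat sd).
exact (Y_Linfty Gam_fin Gam_subS cover lin ext bounded compat sd (bound_ge0 lin bounded g)).
Qed.
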